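(* The binary (i.e., $2$-ary) unbiased black-box complexity of the $\mathrm{DLB}$ problem is $O(n\log n)$.
   Context: Let $n$ be an even positive integer. For $x\in\{0,1\}^n$ consider the blocks $(x_{2\ell+1},x_{2\ell+2})$, $\ell=0,\dots,\frac n2-1$. If $x\neq(1,\dots,1)$, let $m$ be the smallest $\ell$ with $x_{2\ell+1}\neq 1$ or $x_{2\ell+2}\neq 1$, and define $\mathrm{DLB}(x)=2m+1$ if $x_{2m+1}+x_{2m+2}=0$ and $\mathrm{DLB}(x)=2m$ if $x_{2m+1}+x_{2m+2}=1$; set $\mathrm{DLB}(1,\dots,1)=n$. The $\mathrm{DLB}$ problem is to maximize $\mathrm{DLB}$. A $k$-ary variation operator $V$ assigns to each $k$-tuple $(x^1,\dots,x^k)$ of bit strings a probability distribution on $\{0,1\}^n$; it is unbiased if for all $x^1,\dots,x^k,y,z\in\{0,1\}^n$, $\Pr[y=V(x^1,\dots,x^k)]=\Pr[y\oplus z=V(x^1\oplus z,\dots,x^k\oplus z)]$, and for all permutations $\sigma$ of $[1..n]$, $\Pr[y=V(x^1,\dots,x^k)]=\Pr[\sigma(y)=V(\sigma(x^1),\dots,\sigma(x^k))]$, where $\sigma(x)=(x_{\sigma(1)},\dots,x_{\sigma(n)})$. A $k$-ary unbiased black-box algorithm generates $x^{(0)}$ uniformly at random; for $t=1,2,\dots$, based solely on $(f(x^{(0)}),\dots,f(x^{(t-1)}))$, it chooses a $k$-ary unbiased variation operator $V$ and indices $i_1,\dots,i_k\in[0..t-1]$ and samples $x^{(t)}\sim V(x^{(i_1)},\dots,x^{(i_k)})$;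 each search point is evaluated when generated. The runtime is the number of fitness evaluations until (and including) the first evaluation of an optimum. The $k$-ary unbiased black-box complexity of $\mathrm{DLB}$ is the infimum over all $k$-ary unbiased black-box algorithms of the expected runtime on $\mathrm{DLB}$. *)

From HB Require Import structures.
From mathcomp Require Import all_boot all_order all_algebra all_fingroup.
From mathcomp Require Import all_classical all_reals all_analysis.
Set Implicit Arguments. Unset Strict Implicit. Unset Printing Implicit Defensive.
Import Order.TTheory GRing.Theory Num.Theory.
Local Open Scope ring_scope.

Definition bits (n : nat) := {ffun 'I_n -> bool}.

(* the bit at 0-indexed position i (false if out of range) *)
Definition bitn (n : nat) (x : bits n) (i : nat) : bool :=
  nth false [seq x j | j <- enum 'I_n] i.

(* index m of the first block (x_{2m+1},x_{2m+2}) (1-indexed positions)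
   that is not (1,1); equals n/2 if there is none. *)
Definition first_bad_block (n : nat) (x : bits n) : nat :=
  find (fun l => ~~ (bitn x l.*2 && bitn x l.*2.+1)) (iota 0 n./2).

Definition DLB (n : nat) (x : bits n) : nat :=
  let m := first_bad_block x in
  if m == n./2 then n
  else if ~~ bitn x m.*2 && ~~ bitn x m.*2.+1 then m.*2.+1 else m.*2.

Definition is_opt (n : nat) (x : bits n) : bool := [forall y : bits n, DLB y <= DLB x]%N.

Definition bxor (n : nat) (x z : bits n) : bits n := [ffun i => x i (+) z i].
Definition bperm (n : nat) (s : {perm 'I_n}) (x : bits n) : bits n :=
  [ffun i => x (s i)].

(* k-ary variation operator: V xs y = Pr[y = V(x^1,...,x^k)] *)
Definition var_op (R : realType) (n k : nat) :=
  {ffun 'I_k -> bits n} -> bits n -> R.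

Definition is_distr_op (R : realType) (n k : nat) (V : var_op R n k) : Prop :=
  forall xs, (forall y, 0 <= V xs y) /\ \sum_(y : bits n) V xs y = 1.

Definition unbiased_op (R : realType) (n k : nat) (V : var_op R n k) : Prop :=
  (forall xs y z, V xs y = V [ffun j => bxor (xs j) z] (bxor y z)) /\
  (forall xs y (s : {perm 'I_n}),
      V xs y = V [ffun j => bperm s (xs j)] (bperm s y)).

(* An algorithm: given the fitness history (f(x^(0)),...,f(x^(t-1))),
   it chooses an operator and k indices in [0..t-1]. *)
Definition algo (R : realType) (n k : nat) :=
  seq nat -> var_op R n k * ('I_k -> nat).

Definition unbiased_algo (R : realType) (n k : nat) (A : algo R n k) : Prop :=
  forall h : seq nat,
    is_distr_op (A h).1 /\ unbiased_op (A h).1 /\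
    (0 < size h -> forall j, (A h).2 j < size h)%N.

(* probability that, sampling x^(t) from the operator chosen after the
   history pre = (x^(0),...,x^(t-1)), we get y *)
Definition step_prob (R : realType) (n k : nat) (A : algo R n k)
    (pre : seq (bits n)) (y : bits n) : R :=
  let c := A [seq DLB x | x <- pre] in
  c.1 [ffun j => nth y pre (c.2 j)] y.

(* probability that the first size xs search points are exactly xs *)
Definition hist_prob (R : realType) (n k : nat) (A : algo R n k)
    (xs : seq (bits n)) : R :=
  match xs with
  | [::] => 1
  | x0 :: _ => (2 ^+ n)^-1 *
      \prod_(1 <= s < size xs) step_prob A (take s xs) (nth x0 xs s)
  end.

(* Pr[T > t]: none of x^(0),...,x^(t) is an optimum *)
Definition prob_runtime_gt (R : realType) (n k : nat) (A : algo R n k)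
    (t : nat) : R :=
  \sum_(xs : (t.+1).-tuple (bits n) | all (fun x => ~~ is_opt x) xs)
     hist_prob A xs.

(* E[T] = sum_{t >= 0} Pr[T > t], in the extended reals *)
Definition expected_runtime (R : realType) (n k : nat) (A : algo R n k)
    : \bar R :=
  (\sum_(0 <= t <oo) (prob_runtime_gt A t)%:E)%E.

Definition unbiased_bbc (R : realType) (n k : nat) : \bar R :=
  ereal_inf [set expected_runtime A | A in [set A : algo R n k | unbiased_algo A]].

(* The algorithm keeps two sampled points W and O with
   DLB W <= DLB O that agree only on positions where W is 1, so the zero bits Z
   of the first incomplete block of W lie in the set D where W and O differ.
   Flipping a set G included in D in W moves the first incomplete block to the
   right exactly when G contains Z and no other bit of that block, and this is
   visible in the fitness.  The binary unbiased operator "flip in W a uniform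
   subset of size ceil(|E|/2) of E = W xor S", for a third point S with
   Z <= E <= D and |Z| < |E|, succeeds with probability at least 1/8, since
   C(e, ceil(e/2)) <= 8 C(e-2, ceil(e/2)-|Z|).  On success E is halved or,
   once ceil(|E|/2) = |Z|, W is repaired and D loses |Z| elements.  Hence the
   potential 8((ceil(log2 n) + 1)|D| + ceil(log2 |E|)) drops by at least 1 in
   expectation per step, and additive drift bounds the expected runtime by its
   initial value, which is O(n log n). *)

From HB Require Import structures.
From mathcomp Require Import all_boot all_order all_algebra all_fingroup.
From mathcomp Require Import all_classical all_reals all_analysis.
From mathcomp Require Import zify ring lra.
Import Order.TTheory GRing.Theory Num.Theory.

Set Implicit Arguments. Unset Strict Implicit. Unset Printing Implicit Defensive.

(** * Binomial and logarithmic estimates *)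

Lemma uphalf_bounds e : e <= (uphalf e).*2 <= e.+1.
Proof.
have h := odd_double_half e.+1; rewrite uphalfE -!muln2 in h *.
case: (odd _) h => /= h; apply/andP; split; lia.
Qed.

Lemma mul_bin2_down_diag e k : 0 < k ->
  k * (e - k) * 'C(e, k) = e * e.-1 * 'C(e - 2, k.-1).
Proof.
move=> k_gt0; rewrite -[in LHS](prednK k_gt0) mulnAC -mul_bin_diag prednK //.
rewrite -mulnA mulnCA subn2 -mulnA mul_bin_down.
have -> : e.-1 - k.-1 = e - k by lia.
ring.
Qed.

Lemma mul_bin2_diag e k : 1 < k ->
  k * k.-1 * 'C(e, k) = e * e.-1 * 'C(e - 2, k - 2).
Proof.
move=> k_gt1; have k_gt0 : 0 < k by lia.
rewrite -[in LHS](prednK k_gt0) mulnAC -mul_bin_diag prednK // -mulnA mulnCA.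
have -> : k - 2 = k.-2 by lia.
rewrite subn2 -mulnA mul_bin_diag prednK; [ring | lia].
Qed.

Lemma bin_uphalf_le e z : 0 < z <= 2 -> z < e ->
  'C(e, uphalf e) <= 8 * 'C(e - 2, uphalf e - z).
Proof.
move=> /andP[z_gt0 z_le2] z_lt_e; set k := uphalf e.
have /andP[e_le2k k2_le] := uphalf_bounds e; rewrite -/k -muln2 in e_le2k k2_le.
have [z1 | z2] : z = 1 \/ z = 2 by lia.
- have pos : 0 < k * (e - k) by rewrite muln_gt0; apply/andP; split; lia.
  rewrite z1 subn1 -(leq_pmul2l pos) mul_bin2_down_diag; last by lia.
  by rewrite mulnA; apply: leq_mul => //; nia.
- have pos : 0 < k * k.-1 by rewrite muln_gt0; apply/andP; split; lia.
  rewrite z2 -(leq_pmul2l pos) mul_bin2_diag; last by lia.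
  by rewrite mulnA; apply: leq_mul => //; nia.
Qed.

Lemma up_log_uphalf e : 1 < e -> up_log 2 (uphalf e) < up_log 2 e.
Proof.
move=> e_gt1; set u := up_log 2 e.
have u_gt0 : 0 < u by rewrite /u up_log_gt0.
have e_le : e <= 2 ^ u by apply: up_logP.
have e2 : 2 ^ u = 2 * 2 ^ u.-1 by rewrite -expnS prednK.
have hk := uphalf_bounds e; rewrite -muln2 in hk.
suff : up_log 2 (uphalf e) <= u.-1 by lia.
by apply: up_log_min => //; move: hk e_le; rewrite e2; lia.
Qed.

(** * Difference sets and flips *)

Section DifferenceSets.
Variable n : nat.
Implicit Types x y z : bits n.

Definition dset x y : {set 'I_n} := [set i | x i != y i].
Definition flip x (G : {set 'I_n}) : bits n := [ffun i => x i (+) (i \in G)].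
Definition compl x : bits n := [ffun i => ~~ x i].

Lemma dset_sym x y : dset x y = dset y x.
Proof. by apply/setP => i; rewrite !inE eq_sym. Qed.

Lemma dset_flip x G : dset x (flip x G) = G.
Proof. by apply/setP => i; rewrite !inE ffunE; case: (x i); case: (i \in G). Qed.

Lemma flip_dset x y : flip x (dset x y) = y.
Proof. by apply/ffunP => i; rewrite ffunE inE; case: (x i); case: (y i). Qed.

Lemma flip_inj x : injective (flip x).
Proof. by move=> G1 G2 eG; rewrite -(dset_flip x G1) eG dset_flip. Qed.

Lemma card_dset x (P : pred {set 'I_n}) :
  #|[set y | P (dset x y)]| = #|[set G | P G]|.
Proof.
have -> : [set y | P (dset x y)] = flip x @: [set G | P G].
  apply/setP => y; rewrite inE; apply/idP/imsetP.
  - by move=> PG; exists (dset x y); rewrite ?inE ?flip_dset.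
  - by case=> G; rewrite inE => PG ->; rewrite dset_flip.
by rewrite card_imset //; apply: flip_inj.
Qed.

Lemma dset_compl x : dset x (compl x) = [set: 'I_n].
Proof. by apply/setP => i; rewrite !inE ffunE; case: (x i). Qed.

Lemma dset_bxor x y z : dset (bxor x z) (bxor y z) = dset x y.
Proof.
by apply/setP => i; rewrite !inE !ffunE; case: (x i); case: (y i); case: (z i).
Qed.

Lemma dset_bperm (s : {perm 'I_n}) x y :
  dset (bperm s x) (bperm s y) = s @^-1: dset x y.
Proof. by apply/setP => i; rewrite !inE !ffunE. Qed.

Lemma bxor_inj z : injective (fun x => bxor x z).
Proof.
move=> x y /ffunP exy; apply/ffunP => i; move: (exy i); rewrite !ffunE.
by case: (x i); case: (y i); case: (z i).
Qed.

Lemma bperm_inj (s : {perm 'I_n}) : injective (bperm s).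
Proof.
move=> x y /ffunP exy; apply/ffunP => i.
by move: (exy (s^-1 i)%g); rewrite !ffunE permKV.
Qed.

Lemma compl_bxor x z : compl (bxor x z) = bxor (compl x) z.
Proof. by apply/ffunP => i; rewrite !ffunE; case: (x i); case: (z i). Qed.

Lemma compl_bperm (s : {perm 'I_n}) x : compl (bperm s x) = bperm s (compl x).
Proof. by apply/ffunP => i; rewrite !ffunE. Qed.

End DifferenceSets.

(** * Blocks *)

Lemma half_eq i l : (i./2 == l) = (i == l.*2) || (i == l.*2.+1).
Proof.
have h := odd_double_half i; rewrite -!muln2 in h.
apply/eqP/orP.
- move=> e; case: (odd i) h => /= h; [right|left]; apply/eqP; rewrite -muln2; lia.
- by case=> /eqP ->; rewrite ?doubleK // (half_bit_double l true).
Qed.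

Section Blocks.
Variable n : nat.
Implicit Types x y : bits n.

Lemma bitnE x (i : 'I_n) : bitn x i = x i.
Proof.
by rewrite /bitn (nth_map i) ?size_enum_ord ?ltn_ord // nth_ord_enum.
Qed.

Definition block_full x l := bitn x l.*2 && bitn x l.*2.+1.

Lemma first_bad_block_le x : first_bad_block x <= n./2.
Proof. by rewrite /first_bad_block -[X in _ <= X](size_iota 0) find_size. Qed.

Lemma block_full_lt_first_bad x l : l < first_bad_block x -> block_full x l.
Proof.
move=> lt_l; have := before_find 0 lt_l.
have l_lt : l < n./2 := leq_trans lt_l (first_bad_block_le x).
by rewrite nth_iota // add0n => /negPn.
Qed.

Lemma block_not_full_first_bad x :
  first_bad_block x < n./2 -> ~~ block_full x (first_bad_block x).
Proof.
move=> lt_fbb.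
have has_bad : has (fun l => ~~ block_full x l) (iota 0 n./2).
  by rewrite has_find size_iota.
by have := nth_find 0 has_bad; rewrite nth_iota // add0n.
Qed.

Lemma first_bad_block_ge x l : l <= n./2 ->
  (forall j, j < l -> block_full x j) -> l <= first_bad_block x.
Proof.
move=> le_l full; case: (leqP l (first_bad_block x)) => // lt_fbb.
have := block_not_full_first_bad (leq_trans lt_fbb le_l).
by rewrite full.
Qed.

Hypothesis n_even : ~~ odd n.

Lemma double_half_n : (n./2).*2 = n.
Proof. by rewrite -{2}(odd_double_half n) (negbTE n_even). Qed.

Definition block l : {set 'I_n} := [set i : 'I_n | i./2 == l].

Lemma block_pair l : l < n./2 -> exists lo hi : 'I_n,
  [/\ val lo = l.*2, val hi = l.*2.+1 & block l = [set lo; hi]].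
Proof.
move=> lt_l; have := double_half_n; rewrite -muln2 => n2.
have lo : l.*2 < n by rewrite -muln2; lia.
have hi : l.*2.+1 < n by rewrite -muln2; lia.
exists (Ordinal lo), (Ordinal hi); split => //.
by apply/setP => i; rewrite !inE half_eq -!val_eqE.
Qed.

Lemma card_block l : #|block l| <= 2.
Proof.
have inj : {in block l &, injective (fun i : 'I_n => odd i)}.
  move=> i j; rewrite !inE => /eqP il /eqP jl eij; apply: val_inj => /=.
  by rewrite -(odd_double_half i) -(odd_double_half j) eij il jl.
by rewrite -(card_in_imset inj) (leq_trans (max_card _)) ?card_bool.
Qed.

Lemma block_fullE x l : l < n./2 -> block_full x l = [forall i in block l, x i].
Proof.
move=> /block_pair[lo [hi [elo ehi ->]]].
rewrite /block_full -ehi -elo !bitnE; apply/andP/forall_inP.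
- by case=> xlo xhi i; rewrite !inE => /orP[] /eqP ->.
- by move=> full; split; apply: full; rewrite !inE eqxx ?orbT.
Qed.

Lemma bit_lt_first_bad x (i : 'I_n) : i./2 < first_bad_block x -> x i.
Proof.
move=> lt_i; have := block_full_lt_first_bad lt_i.
rewrite block_fullE; last exact: leq_trans lt_i (first_bad_block_le x).
by move/forall_inP; apply; rewrite inE.
Qed.

Lemma first_bad_block_lt x : (exists i, ~~ x i) -> first_bad_block x < n./2.
Proof.
case=> i xi; have i_lt : i./2 < n./2.
  by have := ltn_ord i; have := double_half_n; have := odd_double_half i; lia.
apply: leq_ltn_trans i_lt; rewrite leqNgt; apply/negP => /bit_lt_first_bad.
exact/negP.
Qed.

Lemma first_bad_block_all x : (forall i, x i) -> first_bad_block x = n./2.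
Proof.
move=> all1; apply/eqP; rewrite eqn_leq first_bad_block_le /=.
apply: first_bad_block_ge => // j lt_j; rewrite block_fullE //.
by apply/forall_inP => i _.
Qed.

Lemma DLB_half x : (DLB x)./2 = first_bad_block x.
Proof.
rewrite /DLB; case: eqP => [->|_]; first by rewrite -{1}double_half_n doubleK.
case: ifP => _; last by rewrite doubleK.
by rewrite -addn1 halfD odd_double doubleK /= addn0.
Qed.

Lemma DLB_lt x : first_bad_block x < n./2 -> DLB x < n.
Proof.
move=> lt_fbb; have := double_half_n; rewrite /DLB ifN ?neq_ltn ?lt_fbb //.
case: ifP => _; lia.
Qed.

Lemma DLB_le x : DLB x <= n.
Proof.
case: (eqVneq (first_bad_block x) n./2) => [fbb_n|fbb_n].
  by rewrite /DLB fbb_n eqxx.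
by apply: ltnW; apply: DLB_lt; rewrite ltn_neqAle fbb_n first_bad_block_le.
Qed.

Lemma DLB_all x : (forall i, x i) -> DLB x = n.
Proof. by move=> all1; rewrite /DLB first_bad_block_all // eqxx. Qed.

Lemma is_optE x : is_opt x = [forall i, x i].
Proof.
apply/idP/forallP => [opt_x i | all1].
- apply/negPn/negP => xi; have /forallP/(_ [ffun=> true]) := opt_x.
  rewrite DLB_all => [|j]; last by rewrite ffunE.
  by rewrite leqNgt DLB_lt //; apply: first_bad_block_lt; exists i.
- by apply/forallP => y; rewrite (DLB_all all1) DLB_le.
Qed.

Definition bad_zeros x := [set i in block (first_bad_block x) | ~~ x i].

(* |bad_zeros x| read off v = DLB x: the block is 00 iff DLB x is odd. *)
Definition bad_zeros_num (v : nat) := if odd v then 2 else 1.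

Lemma bad_zeros_sub_block x : bad_zeros x \subset block (first_bad_block x).
Proof. by apply/fintype.subsetP => i; rewrite inE => /andP[]. Qed.

Lemma card_bad_zeros x : (exists i, ~~ x i) ->
  #|bad_zeros x| = bad_zeros_num (DLB x).
Proof.
move=> /first_bad_block_lt lt_fbb.
have not_full := block_not_full_first_bad lt_fbb.
have [lo [hi [elo ehi eblock]]] := block_pair lt_fbb.
have lo_hi : lo != hi by rewrite -val_eqE elo ehi neq_ltn ltnSn.
have Z i : (i \in bad_zeros x) = ((i == lo) && ~~ x lo) || ((i == hi) && ~~ x hi).
  by rewrite /bad_zeros eblock !inE andb_orl; case: eqP => [->|_]; case: eqP => [->|_].
rewrite /bad_zeros_num /DLB /= (ltn_eqF lt_fbb) -ehi -elo !bitnE.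
move: not_full; rewrite /block_full -ehi -elo !bitnE.
case xlo: (x lo); case xhi: (x hi) => //= _; rewrite ?elo ?ehi /= odd_double.
- suff -> : bad_zeros x = [set hi] by rewrite cards1.
  by apply/setP => i; rewrite Z inE xlo xhi andbF andbT.
- suff -> : bad_zeros x = [set lo] by rewrite cards1.
  by apply/setP => i; rewrite Z inE xlo xhi andbF andbT orbF.
- suff -> : bad_zeros x = [set lo; hi] by rewrite cards2 lo_hi.
  by apply/setP => i; rewrite Z !inE xlo xhi !andbT.
Qed.

Definition repairs x (G : {set 'I_n}) :=
  [forall i in block (first_bad_block x), flip x G i].

Lemma first_bad_block_flip x (G : {set 'I_n}) : (exists i, ~~ x i) ->
  (forall i : 'I_n, i./2 < first_bad_block x -> i \notin G) ->
  (first_bad_block x < first_bad_block (flip x G)) = repairs x G.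
Proof.
move=> /first_bad_block_lt lt_fbb G_above.
set l := first_bad_block x in lt_fbb G_above *.
apply/idP/forall_inP => [lt_flip i i_l | rep].
- have := block_full_lt_first_bad lt_flip; rewrite block_fullE //.
  by move/forall_inP; apply.
- apply: first_bad_block_ge => // j lt_j; rewrite block_fullE; last by lia.
  apply/forall_inP => i; rewrite inE => /eqP ij; case: (ltnP j l) => [lt_jl|ge_jl].
  + rewrite ffunE (negbTE (G_above i _)) ?ij // addbF.
    by apply: bit_lt_first_bad; rewrite ij.
  + by apply: rep; rewrite inE ij; apply/eqP; lia.
Qed.

Lemma repairs_setU x (G : {set 'I_n}) : [disjoint G & block (first_bad_block x)] ->
  repairs x (G :|: bad_zeros x).
Proof.
move=> disjG; apply/forall_inP => i iB.
have iG : (i \in G) = false by apply: disjointFr iB; rewrite disjoint_sym.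
by rewrite ffunE finset.in_setU iG inE iB /=; case: (x i).
Qed.

Lemma repairs_bad_zeros_sub x G : repairs x G -> bad_zeros x \subset G.
Proof.
move=> /forall_inP rep; apply/fintype.subsetP => i; rewrite inE => /andP[iB xi].
by have := rep i iB; rewrite ffunE (negbTE xi).
Qed.

Lemma card_repairs_ge x (E : {set 'I_n}) k :
  bad_zeros x \subset E -> #|bad_zeros x| <= k ->
  'C(#|E| - 2, k - #|bad_zeros x|) <=
  #|[set G : {set 'I_n} | [&& G \subset E, #|G| == k & repairs x G]]|.
Proof.
move=> ZE Zk; set Z := bad_zeros x; set B := block (first_bad_block x).
have ZB : Z \subset B := bad_zeros_sub_block x.
have EB : #|E| - 2 <= #|E :\: B|.
  have := card_block (first_bad_block x); rewrite -/B => B2.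
  by rewrite cardsD; have := subset_leq_card (subsetIr E B); lia.
apply: leq_trans (leq_bin2l _ EB) _; rewrite -cards_draws.
(* G |-> G :|: Z maps the (k - |Z|)-subsets of E :\: B injectively to repairing sets *)
set dom := [set G : {set 'I_n} | (G \subset E :\: B) && (#|G| == k - #|Z|)].
have disjB G : G \in dom -> [disjoint G & B].
  by rewrite inE subsetD => /andP[/andP[]].
have UZK G : G \in dom -> (G :|: Z) :\: Z = G.
  move=> /disjB dGB; rewrite finset.setDUl finset.setDv finset.setU0.
  by apply/finset.setDidPl; apply: disjointWr ZB dGB.
have inj : {in dom &, injective (fun G => G :|: Z)}.
  by move=> G1 G2 G1dom G2dom eG; rewrite -(UZK G1) // eG UZK.
rewrite -(card_in_imset inj); apply: subset_leq_card.
apply/fintype.subsetP => _ /imsetP[G Gdom ->]; rewrite inE.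
move: (Gdom); rewrite inE => /andP[GEB /eqP cardG].
apply/and3P; split.
- by rewrite finset.subUset ZE andbT (fintype.subset_trans GEB) ?finset.subsetDl.
- have dGZ : [disjoint G & Z] := disjointWr ZB (disjB G Gdom).
  by rewrite cardsU (disjoint_setI0 dGZ) cards0 subn0 cardG subnK.
- exact: repairs_setU (disjB G Gdom).
Qed.

End Blocks.

(** * Two unbiased binary operators *)

Lemma preimset_perm_subset n (s : {perm 'I_n}) (A B : {set 'I_n}) :
  (s @^-1: A \subset s @^-1: B) = (A \subset B).
Proof.
apply/fintype.subsetP/fintype.subsetP => sub i; last by rewrite !inE; apply: sub.
by move=> Ai; have := sub (s^-1 i)%g; rewrite !inE permKV; apply.
Qed.

Section Operators.
Variables (R : realType) (n : nat).
Local Open Scope ring_scope.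

Definition complement_op : var_op R n 2 :=
  fun xs y => if y == compl (xs ord0) then 1 else 0.

Definition flip_half_op : var_op R n 2 :=
  fun xs y =>
    let D := dset (xs ord0) (xs ord_max) in
    if (dset (xs ord0) y \subset D) && (#|dset (xs ord0) y| == uphalf #|D|)
    then ('C(#|D|, uphalf #|D|))%:R^-1 else 0.

Lemma complement_op_distr : is_distr_op complement_op.
Proof.
move=> xs; split=> [y|]; first by rewrite /complement_op; case: ifP.
rewrite (bigD1 (compl (xs ord0))) //= /complement_op eqxx big1 ?addr0 //.
by move=> y /negbTE ->.
Qed.

Lemma complement_op_unbiased : unbiased_op complement_op.
Proof.
split=> [xs y z | xs y s]; rewrite /complement_op ffunE.
- by rewrite compl_bxor (inj_eq (@bxor_inj n z)).
- by rewrite compl_bperm (inj_eq (@bperm_inj n s)).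
Qed.

Lemma flip_half_op_distr : is_distr_op flip_half_op.
Proof.
move=> xs; split=> [y|]; first by rewrite /flip_half_op; case: ifP.
set x := xs ord0; set D := dset x (xs ord_max).
rewrite /flip_half_op -/x -/D -big_mkcond /= sumr_const.
have -> : #|[pred y | (dset x y \subset D) && (#|dset x y| == uphalf #|D|)]|
    = 'C(#|D|, uphalf #|D|).
  rewrite -cards_draws -(card_dset x (fun G => (G \subset D) && (#|G| == _))).
  by apply: eq_card => y; rewrite !inE.
rewrite -[LHS]mulr_natr mulVf // pnatr_eq0 -lt0n bin_gt0.
by have := uphalf_bounds #|D|; rewrite -!muln2; lia.
Qed.

Lemma flip_half_op_unbiased : unbiased_op flip_half_op.
Proof.
split=> [xs y z | xs y s]; rewrite /flip_half_op !ffunE.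
- by rewrite !dset_bxor.
- by rewrite !dset_bperm preimset_perm_subset !card_preimset //; apply: perm_inj.
Qed.

End Operators.

(** * Additive drift *)

Lemma big_tuple_rcons (T : finType) (V : nmodType) t (F : seq T -> V) :
  (\sum_(u : t.+2.-tuple T) F u =
   \sum_(xs : t.+1.-tuple T) \sum_(y : T) F (rcons xs y))%R.
Proof.
rewrite pair_bigA /=.
pose f (p : t.+1.-tuple T * T) : t.+2.-tuple T := [tuple of rcons p.1 p.2].
pose g (u : t.+2.-tuple T) : t.+1.-tuple T * T :=
  ([tuple of belast (thead u) (behead u)], last (thead u) (behead u)).
rewrite (reindex f) /=; last first.
  exists g => [[xs y] _ | u _].
  - case: xs => -[|x s] //= hs; congr pair; first apply: val_inj => /=.
    + by rewrite /thead (tnth_nth x) /= belast_rcons.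
    + by rewrite /thead (tnth_nth x) /= last_rcons.
  - by apply: val_inj => /=; rewrite -lastI [in RHS](tuple_eta u).
by apply: eq_bigr.
Qed.

Section AdditiveDrift.
Variables (R : realType) (n k : nat) (A : algo R n k).
Local Open Scope ring_scope.

Definition no_optimum (xs : seq (bits n)) := all (fun x => ~~ is_opt x) xs.

Lemma hist_prob_rcons xs y : xs != [::] ->
  hist_prob A (rcons xs y) = hist_prob A xs * step_prob A xs y.
Proof.
case: xs => [//|x xs] _.
rewrite /hist_prob rcons_cons /= size_rcons big_nat_recr //= -mulrA.
congr (_ * (_ * _)).
- apply: eq_big_nat => s /andP[_ lt_s].
  by rewrite -rcons_cons -cats1 takel_cat ?nth_cat ?lt_s //; apply: ltnW.
- by rewrite nth_rcons ltnn eqxx -cats1 takel_cat // take_size.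
Qed.

Hypothesis A_unbiased : unbiased_algo A.

Lemma step_prob_ge0 xs y : 0 <= step_prob A xs y.
Proof.
have [distr _] := A_unbiased [seq DLB x | x <- xs].
by case: (distr [ffun j => nth y xs ((A [seq DLB x | x <- xs]).2 j)]) => + _; apply.
Qed.

Lemma hist_prob_ge0 xs : 0 <= hist_prob A xs.
Proof.
case: xs => [|x xs] /=; first exact: ler01.
apply: mulr_ge0; first by rewrite invr_ge0 exprn_ge0 // ler0n.
by apply: prodr_ge0 => s _; apply: step_prob_ge0.
Qed.

Lemma sum_step_prob xs : xs != [::] -> \sum_y step_prob A xs y = 1.
Proof.
case: xs => [//|x0 xs'] _; set xs := x0 :: xs'; set c := A [seq DLB x | x <- xs].
have [distr [_ idx_lt]] := A_unbiased [seq DLB x | x <- xs].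
have step y : step_prob A xs y = c.1 [ffun j => nth x0 xs (c.2 j)] y.
  rewrite /step_prob -/c; congr (_ _ _); apply/ffunP => j.
  by rewrite !ffunE; apply: set_nth_default; have := idx_lt isT j; rewrite size_map.
under eq_bigr do rewrite step.
by case: (distr [ffun j => nth x0 xs (c.2 j)]).
Qed.

Variables (Inv : seq (bits n) -> Prop) (Phi : seq (bits n) -> R) (M : R).
Hypothesis Inv_init : forall x, Inv [:: x].
Hypothesis Inv_step : forall xs y, xs != [::] -> Inv xs ->
  no_optimum (rcons xs y) -> step_prob A xs y != 0 -> Inv (rcons xs y).
Hypothesis Phi_drift : forall xs, xs != [::] -> Inv xs -> no_optimum xs ->
  \sum_y step_prob A xs y * Phi (rcons xs y) <= Phi xs - 1.
Hypothesis Phi_ge0 : forall xs, 0 <= Phi xs.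
Hypothesis Phi_init : forall x, Phi [:: x] <= M.

Lemma Inv_reachable xs : xs != [::] -> hist_prob A xs != 0 -> no_optimum xs -> Inv xs.
Proof.
elim/last_ind: xs => [//|xs y IH] _.
case: (eqVneq xs [::]) => [-> _ _|xs_nil]; first exact: Inv_init.
rewrite hist_prob_rcons // mulf_eq0 negb_or => /andP[hxs_neq0 step_neq0] no_opt.
apply: Inv_step => //; apply: IH => //.
by move: no_opt; rewrite /no_optimum all_rcons => /andP[].
Qed.

(* E[Phi (x^(0), ..., x^(t)); T > t] *)
Definition potential_mass t := \sum_(u : t.+1.-tuple (bits n))
  (if no_optimum u then hist_prob A u * Phi u else 0).

Lemma prob_runtime_gtE t : prob_runtime_gt A t =
  \sum_(u : t.+1.-tuple (bits n)) (if no_optimum u then hist_prob A u else 0).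
Proof. by rewrite /prob_runtime_gt big_mkcond. Qed.

Lemma potential_mass_step t :
  potential_mass t.+1 + prob_runtime_gt A t <= potential_mass t.
Proof.
rewrite /potential_mass prob_runtime_gtE (big_tuple_rcons _ (fun u =>
  if no_optimum u then hist_prob A u * Phi u else 0)) -big_split /=.
apply: ler_sum => xs _; have xs_nil : (xs : seq _) != [::] by case: xs => -[].
have [no_opt|opt] := boolP (no_optimum xs); last first.
  rewrite addr0; apply: sumr_le0 => y _.
  by move: opt; rewrite /no_optimum all_rcons => /negbTE ->; rewrite andbF.
have step y : (if no_optimum (rcons xs y) then
    hist_prob A (rcons xs y) * Phi (rcons xs y) else 0) <=
    hist_prob A xs * (step_prob A xs y * Phi (rcons xs y)).
  rewrite hist_prob_rcons // -mulrA; case: ifP => // _.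
  by rewrite !mulr_ge0 ?hist_prob_ge0 ?step_prob_ge0.
apply: le_trans (lerD (ler_sum _ (fun y _ => step y)) (lexx _)) _.
rewrite -mulr_sumr.
have [->|hxs_neq0] := eqVneq (hist_prob A xs) 0; first by rewrite !mul0r addr0.
have inv_xs := Inv_reachable xs_nil hxs_neq0 no_opt.
have := ler_wpM2l (hist_prob_ge0 xs) (Phi_drift xs_nil inv_xs no_opt).
rewrite mulrBr mulr1; lra.
Qed.

Lemma potential_mass_ge0 t : 0 <= potential_mass t.
Proof.
apply: sumr_ge0 => u _; case: ifP => // _.
by apply: mulr_ge0; [apply: hist_prob_ge0 | apply: Phi_ge0].
Qed.

Lemma potential_mass0 : potential_mass 0 <= M.
Proof.
have inv2n_ge0 : 0 <= ((2:R) ^+ n)^-1 by rewrite invr_ge0 exprn_ge0 // ler0n.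
have bound (u : 1.-tuple (bits n)) :
    (if no_optimum u then hist_prob A u * Phi u else 0) <= (2 ^+ n)^-1 * M.
  case/tupleP: u => x u; rewrite tuple0 /=.
  have M_ge0 : 0 <= M by apply: le_trans (Phi_ge0 [:: x]) (Phi_init x).
  case: ifP => _; last exact: mulr_ge0.
  by rewrite /hist_prob /= big_geq // mulr1; apply: ler_wpM2l.
apply: le_trans (ler_sum _ (fun u _ => bound u)) _.
rewrite sumr_const card_tuple card_ffun card_bool card_ord expn1.
rewrite -mulrnAl -mulr_natr natrX mulVf ?mul1r // expf_neq0 // pnatr_eq0.
Qed.

Lemma expected_runtime_le : (expected_runtime A <= M%:E)%E.
Proof.
have partial K : \sum_(0 <= t < K) prob_runtime_gt A t <= M.
  suff : \sum_(0 <= t < K) prob_runtime_gt A t + potential_mass K <= potential_mass 0.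
    by have := potential_mass_ge0 K; have := potential_mass0; lra.
  elim: K => [|K IH]; first by rewrite big_geq // add0r.
  by rewrite big_nat_recr //=; have := potential_mass_step K; lra.
have ge0 t : (0 <= t)%N -> true -> (0 <= (prob_runtime_gt A t)%:E)%E.
  by move=> _ _; rewrite lee_fin sumr_ge0 // => u _; apply: hist_prob_ge0.
apply: (lime_le (is_cvg_nneseries ge0)); apply: nearW => K.
by rewrite sumEFin lee_fin partial.
Qed.

End AdditiveDrift.

(** * The algorithm *)

Section Algorithm.
Variables (R : realType) (n : nat).

(* [Search w fw o fo s d e]: the search points W, O, S have indices w, o, s
   in the history, fw = DLB W <= fo = DLB O, d = #|dset W O| and
   e = #|dset W S|. *)
Inductive state :=
  | Start
  | Init of nat
  | Search of nat & nat & nat & nat & nat & nat & nat.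

Definition pair_state a fa b fb d :=
  if fa <= fb then Search a fa b fb b d d else Search b fb a fa a d d.

Definition next_state (t v : nat) (st : state) : state :=
  match st with
  | Start => Init v
  | Init v0 => pair_state 0 v0 1 v n
  | Search w fw o fo s d e =>
    if fw./2 < v./2 then
      if uphalf e == bad_zeros_num fw then pair_state t v o fo (d - bad_zeros_num fw)
      else Search w fw o fo t d (uphalf e)
    else st
  end.

Definition run (h : seq nat) : nat * state :=
  foldl (fun p v => (p.1.+1, next_state p.1 v p.2)) (0, Start) h.

Lemma run_rcons h v :
  run (rcons h v) = ((run h).1.+1, next_state (run h).1 v (run h).2).
Proof. by rewrite /run foldl_rcons. Qed.

Lemma run_size h : (run h).1 = size h.
Proof. by elim/last_ind: h => [//|h v IH]; rewrite run_rcons /= IH size_rcons. Qed.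

Definition indices_lt (t : nat) (st : state) :=
  match st with
  | Start => true
  | Init _ => 0 < t
  | Search w _ o _ s _ _ => [&& w < t, o < t & s < t]
  end.

Lemma indices_lt_run h : indices_lt (size h) (run h).2.
Proof.
elim/last_ind: h => [//|h v]; rewrite run_rcons size_rcons /= -run_size.
case: (run h) => t [|v0|w fw o fo s d e] /=; rewrite /pair_state.
- by [].
- by move=> t_gt0; case: ifP => _ /=; lia.
- move=> /and3P[w_lt o_lt s_lt]; case: ifP => _ /=; last lia.
  by case: ifP => _ /=; [case: ifP => _ /= |]; lia.
Qed.

Definition dlb_algo : algo R n 2 := fun h =>
  match (run h).2 with
  | Search w _ _ _ s _ _ =>
    (@flip_half_op R n, fun j : 'I_2 => if val j == 0 then w else s)
  | _ => (@complement_op R n, fun _ => 0)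
  end.

Lemma dlb_algo_unbiased : unbiased_algo dlb_algo.
Proof.
move=> h; rewrite /dlb_algo; have := indices_lt_run h.
case: (run h).2 => [|v0|w fw o fo s d e] /=.
- by split; [exact: complement_op_distr | split; [exact: complement_op_unbiased|]].
- by split; [exact: complement_op_distr | split; [exact: complement_op_unbiased|]].
- move=> /and3P[w_lt _ s_lt]; split; first exact: flip_half_op_distr.
  by split; [exact: flip_half_op_unbiased | move=> _ j; case: ifP].
Qed.

End Algorithm.

(** * Invariant and potential *)

Section Invariant.
Variables (R : realType) (n : nat).
Hypothesis n_even : ~~ odd n.
Implicit Types (xs : seq (bits n)) (x y : bits n).

Definition bits0 : bits n := [ffun=> false].

Definition agree_one x y := forall i, x i = y i -> x i.

Lemma agree_one_sym x y : agree_one x y -> agree_one y x.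
Proof. by move=> agree i eyx; rewrite eyx; apply: agree. Qed.

Lemma bad_zeros_sub_dset x y : agree_one x y -> bad_zeros x \subset dset x y.
Proof.
move=> agree; apply/fintype.subsetP => i; rewrite !inE => /andP[_ xi].
by apply/eqP => /agree; apply/negP.
Qed.

Record search_inv xs (w fw o fo s d e : nat) : Prop := {
  w_lt : w < size xs;
  o_lt : o < size xs;
  s_lt : s < size xs;
  fw_DLB : fw = DLB (nth bits0 xs w);
  fo_DLB : fo = DLB (nth bits0 xs o);
  fw_le_fo : fw <= fo;
  agree_W_O : agree_one (nth bits0 xs w) (nth bits0 xs o);
  card_D : #|dset (nth bits0 xs w) (nth bits0 xs o)| = d;
  E_sub_D : dset (nth bits0 xs w) (nth bits0 xs s) \subset
            dset (nth bits0 xs w) (nth bits0 xs o);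
  card_E : #|dset (nth bits0 xs w) (nth bits0 xs s)| = e;
  Z_sub_E : bad_zeros (nth bits0 xs w) \subset dset (nth bits0 xs w) (nth bits0 xs s);
  (* the second case occurs when a pair has just been formed; see z_lt_e *)
  Z_lt_E : bad_zeros_num fw < e \/
           dset (nth bits0 xs w) (nth bits0 xs s) = dset (nth bits0 xs w) (nth bits0 xs o)
}.

Definition state_inv xs (st : state) : Prop :=
  match st with
  | Start => False
  | Init v0 => exists x, xs = [:: x] /\ v0 = DLB x
  | Search w fw o fo s d e => search_inv xs w fw o fo s d e
  end.

Definition state_of xs := (run n [seq DLB x | x <- xs]).2.

Definition history_inv xs := state_inv xs (state_of xs).

Definition log_n := up_log 2 n.

(* A successful step lowers the bracket by at least 1 and happens with
   probability at least 1/8; the extra 1 pays for the complement step. *)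
Definition potential (st : state) : nat :=
  match st with
  | Search _ _ _ _ _ d e => 8 * ((log_n + 1) * d + up_log 2 e)
  | _ => 8 * ((log_n + 1) * n + log_n) + 1
  end.

Definition Phi xs : R := ((potential (state_of xs))%:R)%R.

Lemma state_of_rcons xs y :
  state_of (rcons xs y) = next_state n (size xs) (DLB y) (state_of xs).
Proof. by rewrite /state_of map_rcons run_rcons run_size size_map. Qed.

Lemma search_inv_rcons xs y w fw o fo s d e : search_inv xs w fw o fo s d e ->
  search_inv (rcons xs y) w fw o fo s d e.
Proof.
case=> w_lt o_lt s_lt *.
have sz : size xs <= size (rcons xs y) by rewrite size_rcons.
by constructor; rewrite ?nth_rcons ?w_lt ?o_lt ?s_lt //; apply: leq_trans sz.
Qed.

Lemma state_inv_pair xs a b d : a < size xs -> b < size xs ->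
  agree_one (nth bits0 xs a) (nth bits0 xs b) ->
  #|dset (nth bits0 xs a) (nth bits0 xs b)| = d ->
  state_inv xs (pair_state a (DLB (nth bits0 xs a)) b (DLB (nth bits0 xs b)) d).
Proof.
move=> a_lt b_lt agree card_ab; rewrite /pair_state; case: ifP => [le_ab | /negbT].
- by constructor => //; [exact: bad_zeros_sub_dset | right].
- rewrite -ltnNge => /ltnW le_ba; have agree' := agree_one_sym agree.
  rewrite dset_sym in card_ab.
  by constructor => //; [exact: bad_zeros_sub_dset | right].
Qed.

Lemma potential_pair_state a fa b fb d :
  potential (pair_state a fa b fb d) = 8 * ((log_n + 1) * d + up_log 2 d).
Proof. by rewrite /pair_state; case: ifP. Qed.

Lemma step_prob_search xs y w fw o fo s d e :
  state_of xs = Search w fw o fo s d e -> w < size xs -> s < size xs ->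
  step_prob (dlb_algo R n) xs y =
  let E := dset (nth bits0 xs w) (nth bits0 xs s) in
  if (dset (nth bits0 xs w) y \subset E) && (#|dset (nth bits0 xs w) y| == uphalf #|E|)
  then (('C(#|E|, uphalf #|E|))%:R^-1)%R else 0%R.
Proof.
move=> st w_lt s_lt; rewrite /step_prob /dlb_algo -/(state_of xs) st /flip_half_op /=.
by rewrite !ffunE /= !(set_nth_default bits0 y).
Qed.

Lemma step_prob_init xs y v0 : state_of xs = Init v0 -> xs != [::] ->
  step_prob (dlb_algo R n) xs y = if y == compl (nth bits0 xs 0) then 1%R else 0%R.
Proof.
move=> st xs_nil.
rewrite /step_prob /dlb_algo -/(state_of xs) st /= /complement_op ffunE.
by rewrite (set_nth_default bits0 y) // lt0n size_eq0.
Qed.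

Section SearchStep.
Variables (xs : seq (bits n)) (w fw o fo s d e : nat).
Hypothesis inv : search_inv xs w fw o fo s d e.
Hypothesis no_opt : no_optimum xs.
Let W := nth bits0 xs w.
Let O := nth bits0 xs o.
Let S := nth bits0 xs s.

Lemma search_not_opt i : i < size xs -> exists j, ~~ nth bits0 xs i j.
Proof.
move=> i_lt; have /allP/(_ _ (mem_nth bits0 i_lt)) := no_opt.
by rewrite is_optE // negb_forall => /existsP.
Qed.

Lemma card_Z : #|bad_zeros W| = bad_zeros_num fw.
Proof. by rewrite (card_bad_zeros n_even (search_not_opt (w_lt inv))) -(fw_DLB inv). Qed.

Lemma D_above (i : 'I_n) : i./2 < first_bad_block W -> i \notin dset W O.
Proof.
move=> lt_i; have Wi := bit_lt_first_bad n_even lt_i.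
have le_WO : first_bad_block W <= first_bad_block O.
  by rewrite -!(DLB_half n_even) half_leq // -(fw_DLB inv) -(fo_DLB inv) (fw_le_fo inv).
by rewrite inE Wi (bit_lt_first_bad n_even (leq_trans lt_i le_WO)).
Qed.

Lemma accept_repairs (G : {set 'I_n}) : G \subset dset W O ->
  (fw./2 < (DLB (flip W G))./2) = repairs W G.
Proof.
move=> GD; rewrite (fw_DLB inv) !(DLB_half n_even) -/W.
apply: (first_bad_block_flip n_even (search_not_opt (w_lt inv))) => i lt_i.
by apply: contraNN (D_above lt_i); apply: (fintype.subsetP GD).
Qed.

Lemma z_lt_e : bad_zeros_num fw < e.
Proof.
case: (Z_lt_E inv) => // ED; rewrite -(card_E inv) -/W -/S.
rewrite ltn_neqAle -card_Z subset_leq_card ?(Z_sub_E inv) // andbT.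
apply/negP => /eqP cardZ; have [j Oj] := search_not_opt (o_lt inv).
have ZE : bad_zeros W = dset W S by apply/eqP; rewrite eqEcard (Z_sub_E inv) cardZ /=.
have [jD | jD] := boolP (j \in dset W O).
- have := jD; rewrite -ED -ZE !inE => /andP[_ /negbTE Wj].
  by move: jD; rewrite inE Wj (negbTE Oj).
- move: jD; rewrite inE negbK => /eqP WO.
  by have := agree_W_O inv WO; rewrite WO -/O (negbTE Oj).
Qed.

Lemma z_le_d : bad_zeros_num fw <= d.
Proof.
rewrite -card_Z -(card_D inv) subset_leq_card //.
exact: fintype.subset_trans (Z_sub_E inv) (E_sub_D inv).
Qed.

Lemma d_le_n : d <= n.
Proof. by rewrite -(card_D inv) (leq_trans (max_card _)) ?card_ord. Qed.

Lemma state_inv_repair y : repairs W (dset W y) ->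
  #|dset W y| = bad_zeros_num fw ->
  state_inv (rcons xs y) (pair_state (size xs) (DLB y) o fo (d - bad_zeros_num fw)).
Proof.
move=> rep cardG; set G := dset W y.
have GZ : G = bad_zeros W.
  by apply/eqP; rewrite eq_sym eqEcard repairs_bad_zeros_sub // cardG card_Z /=.
have ZD : bad_zeros W \subset dset W O.
  exact: fintype.subset_trans (Z_sub_E inv) (E_sub_D inv).
have yE : y = flip W (bad_zeros W) by rewrite -GZ flip_dset.
have agree_yO : agree_one y O.
  move=> i; rewrite yE ffunE; case Zi: (i \in bad_zeros W).
  + by move: Zi; rewrite inE => /andP[_ /negbTE ->].
  + by rewrite !addbF; apply: (agree_W_O inv).
have dset_yO : dset y O = dset W O :\: bad_zeros W.
  apply/setP => i; have /implyP := fintype.subsetP ZD i; rewrite yE !inE ffunE !inE.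
  by case: (i./2 == _); case: (W i); case: (O i).
have lt_xs : size xs < size (rcons xs y) by rewrite size_rcons.
have := @state_inv_pair (rcons xs y) (size xs) o (d - bad_zeros_num fw) lt_xs.
rewrite !nth_rcons ltnn eqxx (o_lt inv) -(fo_DLB inv) -/O; apply => //.
- exact: leq_trans (o_lt inv) (ltnW lt_xs).
- by rewrite dset_yO cardsD (finset.setIidPr ZD) (card_D inv) card_Z.
Qed.

Lemma search_inv_halve y : dset W y \subset dset W S -> repairs W (dset W y) ->
  #|dset W y| = uphalf e -> uphalf e != bad_zeros_num fw ->
  search_inv (rcons xs y) w fw o fo (size xs) d (uphalf e).
Proof.
move=> GE rep cardG uphalf_z.
have [w_lt o_lt _ fwW foO le agree cD ED _ _ _] := inv.
have lt_xs : size xs < size (rcons xs y) by rewrite size_rcons.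
constructor; rewrite ?nth_rcons ?w_lt ?o_lt ?ltnn ?eqxx //;
  try exact: leq_trans (ltnW lt_xs).
- exact: fintype.subset_trans GE ED.
- exact: repairs_bad_zeros_sub.
- left; rewrite ltn_neqAle eq_sym uphalf_z -cardG -card_Z.
  by rewrite subset_leq_card ?repairs_bad_zeros_sub.
Qed.

Lemma history_inv_search_step y : state_of xs = Search w fw o fo s d e ->
  dset W y \subset dset W S -> #|dset W y| = uphalf e -> history_inv (rcons xs y).
Proof.
move=> st GE cardG; rewrite /history_inv state_of_rcons st /=.
case: ifP => [acc|_]; last exact: search_inv_rcons.
have rep : repairs W (dset W y).
  by rewrite -accept_repairs ?flip_dset // (fintype.subset_trans GE (E_sub_D inv)).
case: ifP => [/eqP uphalf_z | /negbT uphalf_z].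
- by apply: state_inv_repair; rewrite // cardG.
- exact: search_inv_halve.
Qed.

Lemma potential_search_step v :
  potential (next_state n (size xs) v (Search w fw o fo s d e)) + 8 * (fw./2 < v./2)
  <= potential (Search w fw o fo s d e).
Proof.
have z12 : 0 < bad_zeros_num fw <= 2 by rewrite /bad_zeros_num; case: ifP.
have := z_lt_e; have := z_le_d; have := d_le_n.
rewrite /next_state; case: ifP => _ /= z_lt_e z_le_d d_le_n; last by rewrite addn0.
case: ifP => _ /=.
- rewrite potential_pair_state.
  have : up_log 2 (d - bad_zeros_num fw) <= log_n by apply: leq_up_log; lia.
  have : (log_n + 1) * (d - bad_zeros_num fw) + (log_n + 1) <= (log_n + 1) * d.
    by rewrite -mulnSr leq_mul2l; apply/orP; right; lia.
  lia.
- have := @up_log_uphalf e; lia.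
Qed.

Lemma card_accepted_ge : 'C(e, uphalf e) <= 8 * #|[set y |
  (dset W y \subset dset W S) && (#|dset W y| == uphalf e) && (fw./2 < (DLB y)./2)]|.
Proof.
have z12 : 0 < bad_zeros_num fw <= 2 by rewrite /bad_zeros_num; case: ifP.
have z_le : #|bad_zeros W| <= uphalf e.
  by rewrite card_Z; have := uphalf_bounds e; have := z_lt_e; rewrite -muln2; lia.
have := card_repairs_ge n_even (Z_sub_E inv) z_le.
rewrite -(card_dset W (fun G => [&& G \subset dset W S, #|G| == uphalf e & repairs W G])).
rewrite (card_E inv) card_Z => card_rep.
apply: leq_trans (bin_uphalf_le z12 z_lt_e) _; rewrite leq_mul2l.
apply/orP; right; apply: leq_trans card_rep _; apply: subset_leq_card.
apply/fintype.subsetP => y; rewrite !inE => /and3P[GE -> rep] /=; rewrite GE /=.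
rewrite -(flip_dset W y) accept_repairs ?dset_flip //.
exact: fintype.subset_trans GE (E_sub_D inv).
Qed.

Lemma Phi_drift_search : state_of xs = Search w fw o fo s d e ->
  (\sum_y step_prob (dlb_algo R n) xs y * Phi (rcons xs y) <= Phi xs - 1)%R.
Proof.
move=> st; set P := potential (Search w fw o fo s d e); set c := 'C(e, uphalf e).
have c_gt0 : 0 < c by rewrite bin_gt0; have := uphalf_bounds e; rewrite -!muln2; lia.
pose supp y := (dset W y \subset dset W S) && (#|dset W y| == uphalf e).
pose acc y := fw./2 < (DLB y)./2.
pose X y : R := (if supp y && acc y then (c%:R)^-1 else 0)%R.
have stepE y : step_prob (dlb_algo R n) xs y = (if supp y then (c%:R)^-1 else 0)%R.
  by rewrite (step_prob_search y st (w_lt inv) (s_lt inv)) /= (card_E inv).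
have bound y : (step_prob (dlb_algo R n) xs y * Phi (rcons xs y)
    <= step_prob (dlb_algo R n) xs y * P%:R - 8 * X y)%R.
  rewrite stepE /X; case: (supp y) => /=; last by rewrite !mul0r mulr0 subr0.
  have -> : (8 * (if acc y then (c%:R)^-1 else 0) = (c%:R : R)^-1 * (8 * (acc y)%:R))%R.
    by case: (acc y); rewrite /= ?mulr1 ?mulr0 // mulrC.
  rewrite -mulrBr ler_wpM2l ?invr_ge0 ?ler0n //.
  have := potential_search_step (DLB y); rewrite -/P -(ler_nat R) natrD natrM.
  by rewrite /Phi state_of_rcons st /acc; lra.
apply: le_trans (ler_sum _ (fun y _ => bound y)) _.
rewrite sumrB -mulr_suml (sum_step_prob (dlb_algo_unbiased R n)); last first.
  by case: (xs) (w_lt inv).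
rewrite mul1r /Phi -/(state_of xs) st -/P -mulr_sumr.
suff : (1 <= 8 * \sum_y X y)%R by lra.
have -> : (\sum_y X y = (c%:R)^-1 *+ #|[set y | supp y && acc y]|)%R.
  rewrite /X -big_mkcond /= sumr_const; congr (_ *+ _)%R.
  by apply: eq_card => y; rewrite inE.
rewrite -[(_ *+ #|_|)%R]mulr_natr mulrCA mulrC ler_pdivlMr ?ltr0n //.
by rewrite mul1r -natrM ler_nat; apply: card_accepted_ge.
Qed.

End SearchStep.

Lemma history_inv_init x : history_inv [:: x].
Proof. by exists x. Qed.

Lemma state_inv_compl x :
  state_inv [:: x; compl x] (pair_state 0 (DLB x) 1 (DLB (compl x)) n).
Proof.
apply: state_inv_pair => //=; last by rewrite dset_compl cardsT card_ord.
by move=> i; rewrite ffunE; case: (x i).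
Qed.

Lemma history_inv_step xs y : xs != [::] -> history_inv xs ->
  no_optimum (rcons xs y) -> step_prob (dlb_algo R n) xs y != 0%R ->
  history_inv (rcons xs y).
Proof.
move=> xs_nil; rewrite /history_inv state_of_rcons.
case st: (state_of xs) => [|v0|w fw o fo s d e] //=.
- case=> x [xs_x ->] _; rewrite (step_prob_init y st xs_nil) xs_x /=.
  by case: (eqVneq y (compl x)) => [-> _|_]; [exact: state_inv_compl | rewrite eqxx].
- move=> inv; rewrite /no_optimum all_rcons => /andP[_ no_opt].
  rewrite (step_prob_search y st (w_lt inv) (s_lt inv)) /=.
  case: ifP => [/andP[GE /eqP cardG] _ | _]; last by rewrite eqxx.
  have := history_inv_search_step inv no_opt st GE; rewrite cardG (card_E inv).
  by rewrite /history_inv state_of_rcons st; apply.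
Qed.

Lemma Phi_drift xs : xs != [::] -> history_inv xs -> no_optimum xs ->
  (\sum_y step_prob (dlb_algo R n) xs y * Phi (rcons xs y) <= Phi xs - 1)%R.
Proof.
move=> xs_nil; rewrite /history_inv.
case st: (state_of xs) => [|v0|w fw o fo s d e] //=; last first.
  by move=> inv no_opt; apply: (Phi_drift_search inv no_opt st).
case=> x [xs_x v0_x] _.
rewrite (bigD1 (compl x)) //= big1 => [|y /negbTE y_compl]; last first.
  by rewrite (step_prob_init y st xs_nil) xs_x /= y_compl mul0r.
rewrite (step_prob_init _ st xs_nil) xs_x /= eqxx mul1r addr0 /Phi.
have -> : state_of [:: x; compl x] = pair_state 0 (DLB x) 1 (DLB (compl x)) n by [].
by rewrite potential_pair_state -xs_x st (natrD _ _ 1) addrK.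
Qed.

Lemma expected_runtime_dlb_algo :
  (expected_runtime (dlb_algo R n) <= ((8 * ((log_n + 1) * n + log_n) + 1)%:R)%:E)%E.
Proof.
apply: (expected_runtime_le (dlb_algo_unbiased R n) (Inv := history_inv) (Phi := Phi)).
- exact: history_inv_init.
- exact: history_inv_step.
- exact: Phi_drift.
- by move=> xs; rewrite /Phi ler0n.
- by [].
Qed.

End Invariant.

Lemma initial_potential_le n : 2 < n ->
  8 * ((up_log 2 n + 1) * n + up_log 2 n) + 1 <= 100 * n * (up_log 2 n).-1.
Proof.
move=> n_gt2; have : 2 <= up_log 2 n.
  by apply: (@leq_trans (up_log 2 3)) => //; apply: leq_up_log.
case: (up_log 2 n) => [|m] //= m_gt0.
have := leq_mul m_gt0 (leqnn n); have := leq_mul (leqnn m) (ltnW (ltnW n_gt2)); nia.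
Qed.

Local Open Scope ring_scope.

Lemma up_log_ln (R : realType) n : (2 < n)%N ->
  (up_log 2 n).-1%:R * ln (2 : R) <= ln (n%:R : R).
Proof.
move=> n_gt2; have lt_n : (2 ^ (up_log 2 n).-1 < n)%N by apply: up_log_gtn => //; lia.
rewrite mulr_natl -lnXn // ler_ln ?posrE ?exprn_gt0 ?ltr0n //; last by lia.
by rewrite -natrX ler_nat ltnW.
Qed.

Theorem theorem18 (R : realType) :
  exists (C : R) (N : nat), forall n : nat,
    (0 < n)%N -> ~~ odd n -> (N <= n)%N ->
    (unbiased_bbc R n 2 <= (C * n%:R * ln (n%:R : R))%:E)%E.
Proof.
exists (100 / ln 2), 3%N => n _ n_even n_ge3.
have ln2_gt0 : 0 < ln (2 : R) by rewrite ln_gt0 // ltr1n.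
apply: le_trans (ereal_inf_lbound _) _.
  by exists (dlb_algo R n) => //; apply: dlb_algo_unbiased.
apply: le_trans (expected_runtime_dlb_algo R n_even) _; rewrite lee_fin.
apply: le_trans (_ : (100 * n * (up_log 2 n).-1)%:R <= _).
  by rewrite ler_nat initial_potential_le.
have -> : 100 / ln 2 * n%:R * ln n%:R = 100 * n%:R * (ln n%:R / ln (2 : R)).
  by field; rewrite gt_eqF.
rewrite !natrM ler_wpM2l ?mulr_ge0 ?ler0n //.
by rewrite ler_pdivlMr // up_log_ln.
Qed.
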